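(* Consider the linear program $\min\{c^\top x + \sum_{i=1}^t (d^i)^\top y^i : T^i x + Q^i y^i = h^i\ (i \in [t]),\ x \in X,\ y^i \in Y^i\ (i\in[t])\}$ and let $\mathcal{F}' := \{(x,\theta^1,\dots,\theta^t) : x \in X,\ (h^i - T^i x, \theta^i) \in \mathrm{epi}(f^i)\ \forall i \in [t]\}$. Let $\rho \in \mathbb{R}^n$ and $\rho_0^1,\dots,\rho_0^t \ge 0$, and assume $\sigma_{\mathcal{F}'}(\rho,\rho_0^1,\ldots,\rho_0^t)$ is finite. If $(\hat\alpha^1,\dots,\hat\alpha^t)$ is an optimal solution of $$\max_{\alpha^1,\dots,\alpha^t}\Big\{-\sum_{i\in[t]}(\alpha^i)^\top h^i + \sigma_X\Big(\rho + \sum_{i\in[t]}(T^i)^\top\alpha^i\Big) + \sum_{i\in[t]}\sigma_{Y^i}\big((Q^i)^\top\alpha^i + \rho_0^i d^i\big)\Big\},$$ then every $(x,\theta^1,\dots,\theta^t)$ with $x \in X$ satisfying the cuts $(\hat\alpha^i)^\top(h^i - T^i x) + \rho_0^i\theta^i \ge \sigma_{\mathrm{epi}(f^i)}(\hat\alpha^i,\rho_0^i)$ for all $i\in[t]$ also satisfies $\rho^\top x + \sum_{i\in[t]}\rho_0^i\theta^i \ge \sigma_{\mathcal{F}'}(\rho,\rho_0^1,\ldots,\rho_0^t)$.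
   Context: $X \subseteq \mathbb{R}^n$ and $Y^i \subseteq \mathbb{R}^{m_i}$ ($i \in [t]$) are nonempty polyhedra, $T^i \in \mathbb{R}^{p_i \times n}$, $Q^i \in \mathbb{R}^{p_i\times m_i}$, $h^i \in \mathbb{R}^{p_i}$, $d^i \in \mathbb{R}^{m_i}$. For each $i$, $f^i(w) := \inf\{(d^i)^\top y^i : Q^i y^i = w,\ y^i \in Y^i\}$ and $\mathrm{epi}(f^i) := \{(w,\theta) : \theta \ge f^i(w)\}$. For $\mathcal{X} \subseteq \mathbb{R}^k$, $\sigma_{\mathcal{X}}(\alpha) := \inf_{x \in \mathcal{X}}\alpha^\top x$; for sets of tuples the argument is the concatenated coefficient vector. *)

From HB Require Import structures.
From mathcomp Require Import all_boot all_order all_algebra.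
From mathcomp Require Import all_classical all_reals.
From mathcomp Require Import ereal.
Set Implicit Arguments. Unset Strict Implicit. Unset Printing Implicit Defensive.
Import Order.TTheory GRing.Theory Num.Theory.
Local Open Scope ring_scope.
Local Open Scope classical_set_scope.

Section Defs.
Variable R : realType.

Definition vdot (k : nat) (a x : 'cV[R]_k) : R := \sum_(j < k) a j 0 * x j 0.

Definition polyhedron (k : nat) (P : set 'cV[R]_k) : Prop :=
  exists (r : nat) (A : 'M[R]_(r, k)) (b : 'cV[R]_r),
    P = [set x | forall j : 'I_r, (A *m x) j 0 <= b j 0].

Definition sigma (k : nat) (S : set 'cV[R]_k) (a : 'cV[R]_k) : \bar R :=
  ereal_inf [set (vdot a x)%:E | x in S].

Definition valf (p m : nat) (Q : 'M[R]_(p, m)) (d : 'cV[R]_m) (Y : set 'cV[R]_m)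
  (w : 'cV[R]_p) : \bar R :=
  ereal_inf [set (vdot d y)%:E | y in [set y | Q *m y = w /\ Y y]].

Definition epi (p : nat) (f : 'cV[R]_p -> \bar R) : set ('cV[R]_p * R) :=
  [set wt | f wt.1 <= (wt.2)%:E]%E.

Definition sigma_epi (p : nat) (f : 'cV[R]_p -> \bar R) (a : 'cV[R]_p) (r : R)
  : \bar R :=
  ereal_inf [set (vdot a wt.1 + r * wt.2)%:E | wt in epi f].

Definition Fprime (n t : nat) (p m : 'I_t -> nat) (X : set 'cV[R]_n)
  (T : forall i, 'M[R]_(p i, n)) (Q : forall i, 'M[R]_(p i, m i))
  (h : forall i, 'cV[R]_(p i)) (d : forall i, 'cV[R]_(m i))
  (Y : forall i, set 'cV[R]_(m i)) : set ('cV[R]_n * ('I_t -> R)) :=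
  [set xt | X xt.1 /\
     forall i : 'I_t, epi (valf (Q i) (d i) (Y i)) (h i - T i *m xt.1, xt.2 i)].

Definition sigma_F (n t : nat) (F : set ('cV[R]_n * ('I_t -> R)))
  (rho : 'cV[R]_n) (rho0 : 'I_t -> R) : \bar R :=
  ereal_inf [set (vdot rho xt.1 + \sum_(i < t) rho0 i * xt.2 i)%:E | xt in F].

Definition dual_obj (n t : nat) (p m : 'I_t -> nat) (X : set 'cV[R]_n)
  (T : forall i, 'M[R]_(p i, n)) (Q : forall i, 'M[R]_(p i, m i))
  (h : forall i, 'cV[R]_(p i)) (d : forall i, 'cV[R]_(m i))
  (Y : forall i, set 'cV[R]_(m i)) (rho : 'cV[R]_n) (rho0 : 'I_t -> R)
  (a : forall i, 'cV[R]_(p i)) : \bar R :=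
  ((- \sum_(i < t) vdot (a i) (h i))%:E
   + sigma X (rho + \sum_(i < t) (T i)^T *m a i)
   + \sum_(i < t) sigma (Y i) ((Q i)^T *m a i + rho0 i *: d i))%E.

End Defs.

From HB Require Import structures.
From mathcomp Require Import all_boot all_order all_algebra.
From mathcomp Require Import all_classical all_reals.
From mathcomp Require Import ereal.
From mathcomp Require Import ring lra.
From Stdlib Require List.
Set Implicit Arguments. Unset Strict Implicit. Unset Printing Implicit Defensive.
Import Order.TTheory GRing.Theory Num.Theory.
Local Open Scope ring_scope.
Local Open Scope classical_set_scope.

(* LP duality.  Every point of F' dominates a feasible point (x, y) of the
   extensive linear program, with theta^i >= (d^i)^T y^i, so sigma_{F'}(rho, rho0)
   is the optimal value v of  min rho^T x + sum_i rho0^i (d^i)^T y^i  subject to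
   T^i x + Q^i y^i = h^i, x in X, y^i in Y^i.  Farkas' lemma, proved below by
   Fourier-Motzkin elimination, yields multipliers alpha for the linking
   constraints with v <= dual objective at -alpha, hence v <= dual objective at
   alpha-hat.  Each term of the latter is bounded by the cuts:
   sigma_X(rho + sum T^T alpha-hat) <= (rho + sum T^T alpha-hat)^T x, and
   sigma_{Y^i}(Q^T alpha-hat + rho0 d) <= sigma_{epi f^i}(alpha-hat, rho0)
   <= alpha-hat^T (h - T x) + rho0 theta; the sum is rho^T x + sum rho0 theta. *)

Section FourierMotzkin.
Variables (R : realFieldType) (V : finType).

(* A form [(g, k)] stands for the linear inequality [k <= dot S g z]. *)
Definition form := ((V -> R) * R)%type.

Implicit Types (S : {set V}) (g z : V -> R) (P : form -> Prop) (L : list form)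
  (f p q : form).

Definition dot (S : {set V}) (g z : V -> R) : R := \sum_(i in S) g i * z i.

Definition valid (S : {set V}) (P : form -> Prop) (z : V -> R) :=
  forall f, P f -> f.2 <= dot S f.1 z.

Inductive deriv (S : {set V}) (P : form -> Prop) : (V -> R) -> R -> Prop :=
| dmem f : P f -> deriv S P f.1 f.2
| dzero : deriv S P (fun _ => 0) 0
| dadd g1 k1 g2 k2 : deriv S P g1 k1 -> deriv S P g2 k2 ->
    deriv S P (fun i => g1 i + g2 i) (k1 + k2)
| dscale a g k : 0 <= a -> deriv S P g k -> deriv S P (fun i => a * g i) (a * k)
| dweak g k k' : deriv S P g k -> k' <= k -> deriv S P g k'
| dext g g' k : deriv S P g k -> {in S, g =1 g'} -> deriv S P g' k.

Lemma dotT g z : dot [set: V] g z = \sum_i g i * z i.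
Proof. by apply: eq_bigl => i; rewrite inE. Qed.

Lemma dot_ext S g g' z : {in S, g =1 g'} -> dot S g z = dot S g' z.
Proof. by move=> e; apply: eq_bigr => i /e ->. Qed.

Lemma dot0l S z : dot S (fun _ => 0) z = 0.
Proof. by rewrite /dot big1 // => i _; rewrite mul0r. Qed.

Lemma dotDl S g1 g2 z :
  dot S (fun i => g1 i + g2 i) z = dot S g1 z + dot S g2 z.
Proof. by rewrite /dot -big_split; apply: eq_bigr => i _; rewrite mulrDl. Qed.

Lemma dotZl S a g z : dot S (fun i => a * g i) z = a * dot S g z.
Proof. by rewrite /dot mulr_sumr; apply: eq_bigr => i _; rewrite mulrA. Qed.

Lemma dotNl S g z : dot S (fun i => - g i) z = - dot S g z.
Proof. by rewrite /dot -sumrN; apply: eq_bigr => i _; rewrite mulNr. Qed.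

Lemma dotDr S g z1 z2 :
  dot S g (fun i => z1 i + z2 i) = dot S g z1 + dot S g z2.
Proof. by rewrite /dot -big_split; apply: eq_bigr => i _; rewrite mulrDr. Qed.

Lemma dotZr S a g z : dot S g (fun i => a * z i) = a * dot S g z.
Proof. by rewrite /dot mulr_sumr; apply: eq_bigr => i _; rewrite mulrCA. Qed.

Lemma exists_lb (B : list R) : exists x, forall b, List.In b B -> x <= b.
Proof.
elim: B => [|b B [x xB]]; first by exists 0.
exists (Num.min b x) => b' /= [<-|/xB]; first by rewrite ge_min lexx.
by move=> le; rewrite ge_min le orbT.
Qed.

Lemma exists_between (A B : list R) :
  (forall a b, List.In a A -> List.In b B -> a <= b) ->
  exists x, (forall a, List.In a A -> a <= x) /\ (forall b, List.In b B -> x <= b).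
Proof.
elim: A => [|a A IH] AB.
  by have [x xB] := exists_lb B; exists x.
have [|x [Ax xB]] := IH; first by move=> a' b Aa Bb; apply: AB; [right|].
exists (Num.max a x); split.
  by move=> a' /= [<-|/Ax le]; rewrite le_max ?lexx // le orbT.
by move=> b Bb; rewrite ge_max xB // AB //; left.
Qed.

Section Elimination.
Variable v : V.

Definition comb (p q : form) : form :=
  (fun i => - q.1 v * p.1 i + p.1 v * q.1 i, - q.1 v * p.2 + p.1 v * q.2).

Definition elim_var (L : list form) : list form :=
  List.filter (fun f => f.1 v == 0) L ++
  List.flat_map (fun p => List.map (comb p) (List.filter (fun q => q.1 v < 0) L))
    (List.filter (fun p => 0 < p.1 v) L).

Lemma elim_varP L f : List.In f (elim_var L) ->
  (List.In f L /\ f.1 v = 0) \/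
  exists p q, [/\ List.In p L, List.In q L, 0 < p.1 v, q.1 v < 0 & f = comb p q].
Proof.
rewrite List.in_app_iff => -[/List.filter_In [Lf /eqP f0]|]; first by left.
move=> /List.in_flat_map [p [/List.filter_In [Lp p0]]].
by move=> /List.in_map_iff [q [<- /List.filter_In [Lq q0]]]; right; exists p, q.
Qed.

Lemma elim_var_zero L f : List.In f L -> f.1 v = 0 -> List.In f (elim_var L).
Proof.
by move=> Lf f0; apply/List.in_app_iff; left; apply/List.filter_In; rewrite f0 eqxx.
Qed.

Lemma elim_var_comb L p q : List.In p L -> List.In q L -> 0 < p.1 v -> q.1 v < 0 ->
  List.In (comb p q) (elim_var L).
Proof.
move=> Lp Lq p0 q0; apply/List.in_app_iff; right; apply/List.in_flat_map.
by exists p; split; [apply/List.filter_In|apply: List.in_map; apply/List.filter_In].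
Qed.

Lemma deriv_elim_var S L g k :
  deriv (S :\ v) (fun f => List.In f (elim_var L)) g k ->
  exists g', [/\ deriv S (fun f => List.In f L) g' k, {in S :\ v, g' =1 g} & g' v = 0].
Proof.
elim=> {g k}.
- move=> f /elim_varP [[Lf f0]|[p [q [Lp Lq p0 q0 ->]]]].
    by exists f.1; split => //; apply: dmem.
  exists (comb p q).1; split => //=; last by ring.
  apply: dadd; apply: dscale; rewrite ?oppr_ge0 ?ltW //; exact: dmem.
- by exists (fun _ => 0); split => //; apply: dzero.
- move=> g1 k1 g2 k2 _ [h1 [D1 e1 z1]] _ [h2 [D2 e2 z2]].
  exists (fun i => h1 i + h2 i); split; first exact: dadd.
    by move=> i iS /=; rewrite e1 // e2.
  by rewrite z1 z2 addr0.
- move=> a g k a0 _ [h [D e z]]; exists (fun i => a * h i); split.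
  + exact: dscale.
  + by move=> i iS; rewrite e.
  + by rewrite z mulr0.
- by move=> g k k' _ [h [D e z]] kk; exists h; split => //; apply: dweak kk.
- move=> g g' k _ [h [D e z]] e'; exists h; split => // i iS.
  by rewrite e // e'.
Qed.

Lemma dot_setD1 S g z x : v \in S ->
  dot S g (fun i => if i == v then x else z i) = g v * x + dot (S :\ v) g z.
Proof.
move=> vS; rewrite /dot (big_setD1 v vS) eqxx; congr (_ + _).
by apply: eq_bigr => i /setD1P [/negbTE -> _].
Qed.

Lemma valid_elim_var S L z : v \in S ->
  valid (S :\ v) (fun f => List.In f (elim_var L)) z ->
  exists x, valid S (fun f => List.In f L) (fun i => if i == v then x else z i).
Proof.
move=> vS zE.
pose bnd (f : form) := (f.2 - dot (S :\ v) f.1 z) / f.1 v.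
have bnd_pq p q : List.In p L -> List.In q L -> 0 < p.1 v -> q.1 v < 0 ->
    bnd p <= bnd q.
  move=> Lp Lq p0 q0; have := zE _ (elim_var_comb Lp Lq p0 q0).
  rewrite /= dotDl !dotZl /bnd ler_pdivrMr // mulrAC ler_ndivlMr // => ?; nra.
pose pos := List.map bnd (List.filter (fun p => 0 < p.1 v) L).
pose neg := List.map bnd (List.filter (fun q => q.1 v < 0) L).
have [x [lex gex]] : exists x, (forall a, List.In a pos -> a <= x) /\
    (forall b, List.In b neg -> x <= b).
  apply: exists_between => a b /List.in_map_iff [p [<- /List.filter_In [Lp p0]]].
  by move=> /List.in_map_iff [q [<- /List.filter_In [Lq q0]]]; apply: bnd_pq.
exists x => f Lf; rewrite dot_setD1 //.
case: (ltgtP (f.1 v) 0) => f0.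
- have : x <= bnd f by apply: gex; apply: List.in_map; apply/List.filter_In.
  by rewrite /bnd ler_ndivlMr // => ?; lra.
- have : bnd f <= x by apply: lex; apply: List.in_map; apply/List.filter_In.
  by rewrite /bnd ler_pdivrMr // => ?; lra.
- by rewrite f0 mul0r add0r; apply: zE; apply: elim_var_zero.
Qed.

End Elimination.

Lemma farkas_infeasible S L : ~ (exists z, valid S (fun f => List.In f L) z) ->
  deriv S (fun f => List.In f L) (fun _ => 0) 1.
Proof.
have [N ltSN] := ubnP #|S|; elim: N => // N IH in S L ltSN *.
case: (set_0Vmem S) => [->|[v vS]] infeas.
  have [f [Lf f0]] : exists f, List.In f L /\ 0 < f.2.
    apply: contrapT => noPos; apply: infeas; exists (fun _ => 0) => f Lf.
    rewrite /dot big_set0 leNgt; apply/negP => f0; apply: noPos; by exists f.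
  apply: (@dext _ _ (fun i => f.2^-1 * f.1 i)); last by move=> i; rewrite inE.
  rewrite -(mulVf (lt0r_neq0 f0)); apply: dscale; first by rewrite invr_ge0 ltW.
  exact: dmem.
have ltS'N : (#|S :\ v| < N)%N by rewrite (cardsD1 v) vS in ltSN.
have infeas' : ~ exists z, valid (S :\ v) (fun f => List.In f (elim_var v L)) z.
  move=> [z /(valid_elim_var vS) [x zL]].
  by apply: infeas; exists (fun i => if i == v then x else z i).
have [g' [D e g'0]] := deriv_elim_var (IH _ _ ltS'N infeas').
apply: (dext D) => i iS; case: (eqVneq i v) => [->//|iv].
by rewrite e // in_setD1 iv.
Qed.

End FourierMotzkin.

Section Farkas.
Variables (R : realFieldType) (V : finType).
Implicit Types (L : list (form R V)) (c g z w : V -> R).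

Lemma dot_option (g z : option V -> R) :
  dot [set: option V] g z =
  g None * z None + dot [set: V] (fun i => g (Some i)) (fun i => z (Some i)).
Proof.
rewrite !dotT (bigD1 None) //=; congr (_ + _).
rewrite (reindex_omap Some id) => [|[]//].
by apply: eq_bigl => i; rewrite eqxx.
Qed.

Lemma dot_recession S L z0 w c v :
  valid S (fun f => List.In f L) z0 -> (forall f, List.In f L -> 0 <= dot S f.1 w) ->
  (forall z, valid S (fun f => List.In f L) z -> v <= dot S c z) -> 0 <= dot S c w.
Proof.
move=> z0L wL cL; rewrite leNgt; apply/negP => cw0.
pose s := (`|dot S c z0 - v| + 1) / - dot S c w.
have s0 : 0 <= s by rewrite divr_ge0 // ?addr_ge0 // oppr_ge0 ltW.
have zs : valid S (fun f => List.In f L) (fun i => z0 i + s * w i).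
  move=> f Lf; rewrite dotDr dotZr.
  have := mulr_ge0 s0 (wL f Lf); have := z0L f Lf; lra.
have := cL _ zs; rewrite dotDr dotZr.
have -> : s * dot S c w = - (`|dot S c z0 - v| + 1).
  by rewrite /s invrN mulrN mulNr divfK ?lt_eqF.
have := ler_norm (dot S c z0 - v); lra.
Qed.

(* Homogenization: a new coordinate [None] plays the role of the constant 1, and
   the objective row [v t - c.z >= 1] asks for a point improving on the bound [v]. *)
Definition homogenize L c v : list (form R (option V)) :=
  (oapp (fun _ => 0) 1, 0) :: (oapp (fun i => - c i) v, 1) ::
  List.map (fun f => (oapp f.1 (- f.2), 0)) L.

Lemma homogenize_infeasible L c v :
  (exists z0, valid [set: V] (fun f => List.In f L) z0) ->
  (forall z, valid [set: V] (fun f => List.In f L) z -> v <= dot [set: V] c z) ->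
  ~ exists y, valid [set: option V] (fun f => List.In f (homogenize L c v)) y.
Proof.
move=> [z0 z0L] cL [y yH]; pose t := y None; pose w i := y (Some i).
have t0 : 0 <= t.
  by have := yH _ (or_introl erefl); rewrite dot_option /= -/t -/w mul1r dot0l addr0.
have objective : 1 <= v * t - dot [set: V] c w.
  have := yH _ (or_intror (or_introl erefl)).
  by rewrite dot_option /= -/t -/w dotNl addrC.
have wL f : List.In f L -> f.2 * t <= dot [set: V] f.1 w.
  move=> Lf; have := yH _ (or_intror (or_intror (List.in_map _ _ _ Lf))).
  by rewrite dot_option /= -/t -/w mulNr => ?; lra.
case: (ltgtP t 0) => [|tP|t_eq0]; first by lra.
  have : v <= dot [set: V] c (fun i => t^-1 * w i).
    apply: cL => f Lf; rewrite dotZr ler_pdivlMl // mulrC; exact: wL.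
  by rewrite dotZr ler_pdivlMl // => ?; lra.
have : 0 <= dot [set: V] c w.
  by apply: (dot_recession z0L) cL => f /wL; rewrite t_eq0 mulr0.
by move: objective; rewrite t_eq0 mulr0 => ?; lra.
Qed.

(* [nu] is the total weight that a derivation puts on the objective row. *)
Lemma dehomogenize L c v G K :
  deriv [set: option V] (fun f => List.In f (homogenize L c v)) G K ->
  exists nu h, [/\ 0 <= nu, K <= nu,
    deriv [set: V] (fun f => List.In f L) h (nu * v - G None)
    & forall i, G (Some i) = h i - nu * c i].
Proof.
elim=> {G K}.
- move=> f [<-|[<-|/List.in_map_iff [f' [<- Lf']]]] /=.
  + exists 0, (fun _ => 0); split => //.
      by apply: (dweak (dzero _ _)); rewrite mul0r sub0r lerN10.
    by move=> i; rewrite mul0r subr0.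
  + exists 1, (fun _ => 0); split => //; first by rewrite mul1r subrr; apply: dzero.
    by move=> i; rewrite mul1r sub0r.
  + exists 0, f'.1; split => //; first by rewrite mul0r sub0r opprK; apply: dmem.
    by move=> i; rewrite mul0r subr0.
- exists 0, (fun _ => 0); split => //; first by rewrite mul0r subr0; apply: dzero.
  by move=> i; rewrite mul0r subr0.
- move=> g1 k1 g2 k2 _ [n1 [h1 [n10 K1 D1 E1]]] _ [n2 [h2 [n20 K2 D2 E2]]].
  exists (n1 + n2), (fun i => h1 i + h2 i); split; rewrite ?addr_ge0 ?lerD //.
    have -> : (n1 + n2) * v - (g1 None + g2 None) =
      (n1 * v - g1 None) + (n2 * v - g2 None) by ring.
    exact: dadd.
  by move=> i; rewrite E1 E2; ring.
- move=> a g k a0 _ [n [h [n0 Kn D E]]].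
  exists (a * n), (fun i => a * h i); split; rewrite ?mulr_ge0 ?ler_wpM2l //.
    by rewrite -mulrA -mulrBr; apply: dscale.
  by move=> i; rewrite E; ring.
- move=> g k k' _ [n [h [n0 Kn D E]]] kk; exists n, h; split => //.
  exact: le_trans kk Kn.
- move=> g g' k _ [n [h [n0 Kn D E]]] e; exists n, h.
  by split => //; rewrite -?e // => i; rewrite -e ?E.
Qed.

Theorem farkas L c v :
  (exists z0, valid [set: V] (fun f => List.In f L) z0) ->
  (forall z, valid [set: V] (fun f => List.In f L) z -> v <= dot [set: V] c z) ->
  deriv [set: V] (fun f => List.In f L) c v.
Proof.
move=> feas bnd.
have [nu [h [_ nu1 D E]]] := dehomogenize (farkas_infeasible
  (homogenize_infeasible feas bnd)).
have nu0 : 0 < nu by apply: lt_le_trans nu1.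
apply: (dext (g := fun i => nu^-1 * h i)) => [|i _].
  have -> : v = nu^-1 * (nu * v - 0) by rewrite subr0 mulKf ?lt0r_neq0.
  by apply: dscale; rewrite ?invr_ge0 ?ltW.
by move/eqP: (E i); rewrite eq_sym subr_eq add0r => /eqP ->; rewrite mulKf ?lt0r_neq0.
Qed.

End Farkas.

Lemma In_enum (T : finType) (x : T) : List.In x (enum T).
Proof.
have : x \in enum T by rewrite mem_enum.
by elim: (enum T) => //= y s IH; rewrite in_cons => /orP [/eqP ->|/IH]; [left|right].
Qed.

Section Systems.
Variables (R : realFieldType) (V : finType).
Implicit Types (P : form R V -> Prop) (f : form R V).

Definition finite_system P := exists L, P = (fun f => List.In f L).

Definition oppf f : form R V := (fun i => - f.1 i, - f.2).

Lemma finite_system_image (C : finType) (e : C -> form R V) :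
  finite_system (fun f => exists j, f = e j).
Proof.
exists (List.map e (enum C)); apply/funext => f; apply/propext; split.
  by move=> [j ->]; apply/List.in_map/In_enum.
by move=> /List.in_map_iff [j [<- _]]; exists j.
Qed.

Lemma finite_system_pm (C : finType) (e : C -> form R V) :
  finite_system (fun f => exists j, f = e j \/ f = oppf (e j)).
Proof.
exists (List.flat_map (fun j => [:: e j; oppf (e j)]) (enum C)).
apply/funext => f; apply/propext; split.
  move=> [j ej]; apply/List.in_flat_map; exists j; split; first exact: In_enum.
  by case: ej => ->; [left|right; left].
by move=> /List.in_flat_map [j [_ [<-|[<-|//]]]]; exists j; [left|right].
Qed.

Lemma finite_systemU P1 P2 : finite_system P1 -> finite_system P2 ->
  finite_system (fun f => P1 f \/ P2 f).
Proof.
move=> [L1 ->] [L2 ->]; exists (L1 ++ L2).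
by apply/funext => f; apply/propext; rewrite List.in_app_iff.
Qed.

Lemma finite_system_bigU (I : finType) (P : I -> form R V -> Prop) :
  (forall i, finite_system (P i)) -> finite_system (fun f => exists i, P i f).
Proof.
move=> /choice [Ls PLs]; exists (List.flat_map Ls (enum I)).
apply/funext => f; apply/propext; split.
  move=> [i]; rewrite PLs => Lf; apply/List.in_flat_map.
  by exists i; split => //; exact: In_enum.
by move=> /List.in_flat_map [i [_ Lf]]; exists i; rewrite PLs.
Qed.

Lemma validU S P1 P2 z :
  valid S (fun f => P1 f \/ P2 f) z <-> valid S P1 z /\ valid S P2 z.
Proof.
split=> [zP|[zP1 zP2] f [/zP1|/zP2] //].
by split=> f Pf; apply: zP; [left|right].
Qed.

Lemma valid_bigU (I : Type) S (P : I -> form R V -> Prop) z :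
  valid S (fun f => exists i, P i f) z <-> forall i, valid S (P i) z.
Proof.
split=> [zP i f Pf|zP f [i Pf]]; last exact: zP Pf.
by apply: zP; exists i.
Qed.

Lemma valid_pm (C : Type) (e : C -> form R V) S z :
  valid S (fun f => exists j, f = e j \/ f = oppf (e j)) z <->
  forall j, dot S (e j).1 z = (e j).2.
Proof.
split=> [zE j|ze f [j [->|->]] /=]; last by rewrite dotNl ze.
  have le1 := zE (e j) (ex_intro _ j (or_introl erefl)).
  have := zE (oppf (e j)) (ex_intro _ j (or_intror erefl)).
  by rewrite /= dotNl lerN2 => le2; apply/eqP; rewrite eq_le le1 le2.
by rewrite ze.
Qed.

Theorem farkas_system P c v : finite_system P ->
  (exists z0, valid [set: V] P z0) ->
  (forall z, valid [set: V] P z -> v <= dot [set: V] c z) -> deriv [set: V] P c v.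
Proof. by move=> [L ->]; apply: farkas. Qed.

Lemma deriv_lagrange (C : finType) (e : C -> form R V) P S g k :
  deriv S (fun f => P f \/ exists j, f = e j \/ f = oppf (e j)) g k ->
  exists mu : C -> R, forall z, valid S P z ->
    k - \sum_j mu j * (e j).2 <= dot S g z - \sum_j mu j * dot S (e j).1 z.
Proof.
have sum0 (F : C -> R) : \sum_j 0 * F j = 0 by rewrite big1 // => j _; rewrite mul0r.
have sumD (mu1 mu2 F : C -> R) :
    \sum_j (mu1 j + mu2 j) * F j = \sum_j mu1 j * F j + \sum_j mu2 j * F j.
  by rewrite -big_split; apply: eq_bigr => j _; rewrite mulrDl.
have sumZ a (mu F : C -> R) : \sum_j (a * mu j) * F j = a * \sum_j mu j * F j.
  by rewrite mulr_sumr; apply: eq_bigr => j _; rewrite mulrA.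
pose delta (j : C) := fun j' => (j' == j)%:R : R.
have sum_delta j (F : C -> R) : \sum_j' delta j j' * F j' = F j.
  rewrite (bigD1 j) //= big1 ?addr0 => [|j' /negbTE ji]; rewrite /delta ?eqxx ?mul1r //.
  by rewrite ji mul0r.
elim=> {g k}.
- move=> f [Pf|[j [->|->]]].
  + by exists (fun _ => 0) => z /(_ f Pf); rewrite !sum0 !subr0.
  + by exists (delta j) => z _; rewrite !sum_delta !subrr.
  + exists (fun j' => -1 * delta j j') => z _.
    by rewrite !sumZ !sum_delta /= dotNl !mulN1r !subrr.
- by exists (fun _ => 0) => z _; rewrite dot0l !sum0 !subr0.
- move=> g1 k1 g2 k2 _ [mu1 H1] _ [mu2 H2]; exists (fun j => mu1 j + mu2 j) => z zP.
  by have := H1 z zP; have := H2 z zP; rewrite dotDl !sumD; lra.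
- move=> a g k a0 _ [mu H]; exists (fun j => a * mu j) => z zP.
  by have := ler_wpM2l a0 (H z zP); rewrite dotZl !sumZ; lra.
- by move=> g k k' _ [mu H] kk; exists mu => z zP; have := H z zP; lra.
- by move=> g g' k _ [mu H] e'; exists mu => z zP; rewrite -(dot_ext z e'); exact: H.
Qed.

End Systems.

Section Vdot.
Variable R : realType.

Lemma vdot0l k (x : 'cV[R]_k) : vdot 0 x = 0.
Proof. by rewrite /vdot big1 // => i _; rewrite mxE mul0r. Qed.

Lemma vdotDl k (a b x : 'cV[R]_k) : vdot (a + b) x = vdot a x + vdot b x.
Proof. by rewrite /vdot -big_split; apply: eq_bigr => i _; rewrite mxE mulrDl. Qed.

Lemma vdotZl k c (a x : 'cV[R]_k) : vdot (c *: a) x = c * vdot a x.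
Proof. by rewrite /vdot mulr_sumr; apply: eq_bigr => i _; rewrite mxE mulrA. Qed.

Lemma vdotNl k (a x : 'cV[R]_k) : vdot (- a) x = - vdot a x.
Proof. by rewrite -scaleN1r vdotZl mulN1r. Qed.

Lemma vdotDr k (a x y : 'cV[R]_k) : vdot a (x + y) = vdot a x + vdot a y.
Proof. by rewrite /vdot -big_split; apply: eq_bigr => i _; rewrite mxE mulrDr. Qed.

Lemma vdotBr k (a x y : 'cV[R]_k) : vdot a (x - y) = vdot a x - vdot a y.
Proof. by rewrite /vdot -sumrB; apply: eq_bigr => i _; rewrite !mxE mulrBr. Qed.

Lemma vdot_suml k t (a : 'I_t -> 'cV[R]_k) x :
  vdot (\sum_(i < t) a i) x = \sum_(i < t) vdot (a i) x.
Proof. by rewrite /vdot exchange_big; apply: eq_bigr => j _; rewrite summxE mulr_suml. Qed.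

Lemma vdot_mulmx k l (a : 'cV[R]_k) (M : 'M[R]_(k, l)) (x : 'cV[R]_l) :
  vdot a (M *m x) = vdot (M^T *m a) x.
Proof.
rewrite /vdot; under eq_bigr do rewrite mxE mulr_sumr.
rewrite exchange_big; apply: eq_bigr => j _; rewrite mxE mulr_suml.
by apply: eq_bigr => i _; rewrite !mxE mulrCA mulrA.
Qed.

Lemma vdot_row k l (A : 'M[R]_(k, l)) (j : 'I_k) (x : 'cV[R]_l) :
  vdot (row j A)^T x = (A *m x) j 0.
Proof. by rewrite mxE; apply: eq_bigr => s _; rewrite !mxE. Qed.

Lemma sum_vdot_dfwith (I : finType) (k : I -> nat) i (a : 'cV[R]_(k i))
    (x : forall i, 'cV[R]_(k i)) :
  \sum_j vdot (eqtype.dfwith (fun j => 0 : 'cV[R]_(k j)) a j) (x j) = vdot a (x i).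
Proof.
rewrite (bigD1 i) //= eqtype.dfwith_in big1 ?addr0 // => j ji.
by rewrite eqtype.dfwith_out 1?eq_sym // vdot0l.
Qed.

Lemma sum_tagged (I : finType) (k : I -> nat) (mu : {i : I & 'I_(k i)} -> R)
    (u : forall i, 'cV[R]_(k i)) :
  \sum_w mu w * u (tag w) (tagged w) 0 =
  \sum_i vdot (\col_r mu (Tagged (fun i => 'I_(k i)) r)) (u i).
Proof.
transitivity (\sum_i \sum_(r : 'I_(k i)) mu (Tagged (fun i => 'I_(k i)) r) * u i r 0).
  by rewrite sig_big_dep; apply: eq_big => // -[i r].
by apply: eq_bigr => i _; apply: eq_bigr => r _; rewrite mxE.
Qed.

End Vdot.

Section Join.
Variables (R : realType) (n t : nat) (m : 'I_t -> nat).

(* The variables [(x, y^1, ..., y^t)] of the primal problem, as one finite type. *)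
Definition var := ('I_n + {i : 'I_t & 'I_(m i)})%type.

Definition join (x : 'cV[R]_n) (y : forall i, 'cV[R]_(m i)) : var -> R :=
  fun u => match u with inl s => x s 0 | inr w => y (tag w) (tagged w) 0 end.

Definition xpart (z : var -> R) : 'cV[R]_n := \col_s z (inl s).
Definition ypart (z : var -> R) i : 'cV[R]_(m i) := \col_s z (inr (Tagged _ s)).

Lemma join_parts z : join (xpart z) (ypart z) = z.
Proof. by apply/funext => -[s|[i s]]; rewrite /join !mxE. Qed.

Lemma xpart_join x y : xpart (join x y) = x.
Proof. by apply/matrixP => s j; rewrite mxE ord1. Qed.

Lemma ypart_join x y : ypart (join x y) = y.
Proof.
by apply: functional_extensionality_dep => i; apply/matrixP => s j; rewrite mxE ord1.
Qed.

Lemma dot_join a b x y :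
  dot [set: var] (join a b) (join x y) = vdot a x + \sum_i vdot (b i) (y i).
Proof.
rewrite dotT big_sumType /=; congr (_ + _).
by rewrite sig_big_dep; apply: eq_big => // -[i r].
Qed.

Lemma dot_join_parts a b z :
  dot [set: var] (join a b) z = vdot a (xpart z) + \sum_i vdot (b i) (ypart z i).
Proof. by rewrite -{1}(join_parts z) dot_join. Qed.

Lemma dot_join_xpart a z :
  dot [set: var] (join a (fun i => 0)) z = vdot a (xpart z).
Proof. by rewrite dot_join_parts big1 ?addr0 // => i _; rewrite vdot0l. Qed.

Lemma dot_join_ypart i (b : 'cV[R]_(m i)) z :
  dot [set: var] (join 0 (eqtype.dfwith (fun i => 0 : 'cV[R]_(m i)) b)) z =
  vdot b (ypart z i).
Proof. by rewrite dot_join_parts vdot0l add0r sum_vdot_dfwith. Qed.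

End Join.

Lemma polyhedron_system (R : realType) (V : finType) k (P : set 'cV[R]_k)
    (lift : 'cV[R]_k -> V -> R) (proj : (V -> R) -> 'cV[R]_k) :
  polyhedron P -> (forall a z, dot [set: V] (lift a) z = vdot a (proj z)) ->
  exists Ps, finite_system Ps /\ forall z, valid [set: V] Ps z <-> P (proj z).
Proof.
move=> [r [A [b ->]]] dot_lift.
exists (fun f => exists j, f = (lift (- (row j A)^T), - b j 0)).
split=> [|z]; first exact: finite_system_image.
split=> [zP j|Pz f [j ->]] /=.
  by have := zP _ (ex_intro _ j erefl); rewrite /= dot_lift vdotNl vdot_row lerN2.
by rewrite dot_lift vdotNl vdot_row lerN2; exact: Pz.
Qed.

Section LagrangeMultipliers.
Variables (R : realType) (n t : nat) (p m : 'I_t -> nat).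
Variables (X : set 'cV[R]_n) (Y : forall i, set 'cV[R]_(m i)).
Variables (T : forall i, 'M[R]_(p i, n)) (Q : forall i, 'M[R]_(p i, m i))
  (h : forall i, 'cV[R]_(p i)).
Arguments Y : clear implicits.
Arguments T : clear implicits.
Arguments Q : clear implicits.
Arguments h : clear implicits.
Hypotheses (polyX : polyhedron X) (polyY : forall i, polyhedron (Y i)).

Definition linking (x : 'cV[R]_n) (y : forall i, 'cV[R]_(m i)) :=
  forall i, T i *m x + Q i *m y i = h i.

Definition linking_row (w : {i : 'I_t & 'I_(p i)}) : form R (var n m) :=
  (join (row (tagged w) (T (tag w)))^T
     (eqtype.dfwith (fun i => 0 : 'cV[R]_(m i)) (row (tagged w) (Q (tag w)))^T),
   h (tag w) (tagged w) 0).

Lemma dot_linking_row w x y :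
  dot [set: var n m] (linking_row w).1 (join x y) =
  (T (tag w) *m x + Q (tag w) *m y (tag w)) (tagged w) 0.
Proof. by rewrite /= dot_join (@sum_vdot_dfwith R _ m) !vdot_row [RHS]mxE. Qed.

Lemma lagrange_multipliers (a : 'cV[R]_n) (b : forall i, 'cV[R]_(m i)) v :
  (exists x y, [/\ X x, forall i, Y i (y i) & linking x y]) ->
  (forall x y, X x -> (forall i, Y i (y i)) -> linking x y ->
     v <= vdot a x + \sum_i vdot (b i) (y i)) ->
  exists al : forall i, 'cV[R]_(p i), forall x y, X x -> (forall i, Y i (y i)) ->
    v - \sum_i vdot (al i) (h i) <=
    vdot a x + \sum_i vdot (b i) (y i) - \sum_i vdot (al i) (T i *m x + Q i *m y i).
Proof.
move=> feas bnd.
have [PX [finX validX]] :=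
  polyhedron_system polyX (@dot_join_xpart R n t m).
have /choice [PY PY_spec] : forall i, exists Ps, finite_system Ps /\
    forall z, valid [set: var n m] Ps z <-> Y i (ypart z i).
  by move=> i; apply: polyhedron_system (polyY i) (@dot_join_ypart R n t m i).
have finY i := (PY_spec i).1; have validY i := (PY_spec i).2.
have valid_in z : valid [set: var n m] (fun f => PX f \/ exists i, PY i f) z <->
    X (xpart z) /\ forall i, Y i (ypart z i).
  rewrite validU valid_bigU validX.
  by split=> -[xP yP]; split=> // i; apply/validY; exact: yP.
have valid_eq z :
    valid [set: var n m] (fun f => exists w, f = linking_row w \/ f = oppf (linking_row w)) z
    <-> linking (xpart z) (ypart z).
  rewrite valid_pm -{1}(join_parts z); split=> [zE i|lz w]; last first.
    by rewrite dot_linking_row lz.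
  by apply/matrixP => r j; rewrite ord1; have := zE (Tagged _ r); rewrite dot_linking_row.
have D : deriv [set: var n m] (fun f => (PX f \/ exists i, PY i f) \/
    exists w, f = linking_row w \/ f = oppf (linking_row w)) (join a b) v.
  apply: farkas_system.
  - apply: finite_systemU (finite_system_pm _).
    exact: finite_systemU finX (finite_system_bigU finY).
  - have [x [y [Xx Yy lxy]]] := feas; exists (join x y).
    by rewrite validU valid_in valid_eq xpart_join ypart_join.
  - move=> z /validU [/valid_in [Xz Yz] /valid_eq lz].
    by rewrite dot_join_parts; apply: bnd.
have [mu Hmu] := deriv_lagrange D.
exists (fun i => \col_r mu (Tagged (fun i => 'I_(p i)) r)) => x y Xx Yy.
have := Hmu (join x y); rewrite valid_in xpart_join ypart_join dot_join => /(_ (conj Xx Yy)).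
rewrite (sum_tagged mu h) -(sum_tagged mu (fun i => T i *m x + Q i *m y i)).
by under [X in _ <= _ - X -> _]eq_bigr do rewrite dot_linking_row.
Qed.

End LagrangeMultipliers.

Section Support.
Variable R : realType.
Local Open Scope ereal_scope.

Lemma sigma_le k (S : set 'cV[R]_k) a x : S x -> sigma S a <= (vdot a x)%:E.
Proof. by move=> Sx; apply: ereal_inf_lbound; exists x. Qed.

Lemma sigma_ge k (S : set 'cV[R]_k) a K :
  (forall x, S x -> K <= (vdot a x)%:E) -> K <= sigma S a.
Proof. by move=> H; apply/ereal_infP => _ [x Sx <-]; apply: H. Qed.

Lemma sigma_lt_pinfty k (S : set 'cV[R]_k) a : S !=set0 -> sigma S a < +oo.
Proof. by move=> [x Sx]; apply: le_lt_trans (sigma_le a Sx) (ltry _). Qed.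

Lemma lee_adde_sigma k (S : set 'cV[R]_k) a (C : \bar R) (K : R) :
  S !=set0 -> C < +oo -> (forall y, S y -> K%:E <= C + (vdot a y)%:E) ->
  K%:E <= C + sigma S a.
Proof.
move=> [y0 Sy0]; case: C => [c| //|] _ H; last by have := H y0 Sy0.
have : (K - c)%:E <= sigma S a.
  by apply: sigma_ge => y Sy; have := H y Sy; rewrite -EFinD !lee_fin; lra.
case: (sigma S a) => [s| |] /=; last by rewrite leeNy_eq.
  by rewrite -EFinD !lee_fin; lra.
by rewrite addey ?leey.
Qed.

Lemma lee_adde_sum_sigma (I : finType) (k : I -> nat) (S : forall i, set 'cV[R]_(k i))
    (a : forall i, 'cV[R]_(k i)) (C : \bar R) (K : R) :
  (forall i, S i !=set0) -> C < +oo ->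
  (forall y, (forall i, S i (y i)) -> K%:E <= C + \sum_i (vdot (a i) (y i))%:E) ->
  K%:E <= C + \sum_i sigma (S i) (a i).
Proof.
move=> S0; pose y0 i := projT1 (cid (S0 i)).
have y0S i : S i (y0 i) by exact: projT2 (cid (S0 i)).
suff : forall r : seq I, uniq r -> forall C, C < +oo ->
    (forall y, (forall i, S i (y i)) -> K%:E <= C + \sum_(i <- r) (vdot (a i) (y i))%:E) ->
    K%:E <= C + \sum_(i <- r) sigma (S i) (a i).
  by apply; exact: index_enum_uniq.
elim=> [_ C' _ /(_ y0 y0S)|j r IH /andP [jr ur] C' C'oo H]; first by rewrite !big_nil.
rewrite big_cons addeA; apply: IH => // [|y yS].
  by apply: lte_add_pinfty => //; exact: sigma_lt_pinfty.
rewrite addeAC; apply: lee_adde_sigma => // [|yj Syj].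
  by apply: lte_add_pinfty => //; apply: lte_sum_pinfty => i _; exact: ltry.
have yjS i : S i (eqtype.dfwith y yj i) by case: eqtype.dfwithP.
have := H _ yjS.
rewrite big_cons eqtype.dfwith_in addeCA addeC.
congr (_ <= _ + _ + _); apply: eq_big_seq => i ir.
by rewrite eqtype.dfwith_out //; apply: contraNneq jr => ->.
Qed.

End Support.

Lemma sigma_le_sigma_epi (R : realType) p m (Q : 'M[R]_(p, m)) (d : 'cV[R]_m)
    (Y : set 'cV[R]_m) (a : 'cV[R]_p) (r : R) : 0 <= r ->
  (sigma Y (Q^T *m a + r *: d) <= sigma_epi (valf Q d Y) a r)%E.
Proof.
move=> r0; apply/ereal_infP => _ [[w th] Hepi <-] /=.
apply/lee_addgt0Pr => e e0.
pose de := e / (r + 1).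
have de0 : 0 < de by rewrite divr_gt0 // ltr_wpDl.
have rde : r * de <= e by rewrite mulrA ler_pdivrMr ?ltr_wpDl //; nra.
have : (valf Q d Y w < (th + de)%:E)%E.
  by apply: le_lt_trans Hepi _; rewrite lte_fin ltrDl.
move=> /ereal_inf_lt [_ [y [Qy Yy] <-]]; rewrite lte_fin => hy.
apply: le_trans (sigma_le _ Yy) _.
rewrite -EFinD lee_fin vdotDl vdotZl -vdot_mulmx Qy.
by have := ler_wpM2l r0 (ltW hy); lra.
Qed.

Section Duality.
Variables (R : realType) (n t : nat) (p m : 'I_t -> nat).
Variables (X : set 'cV[R]_n) (Y : forall i : 'I_t, set 'cV[R]_(m i)).
Variables (T : forall i, 'M[R]_(p i, n)) (Q : forall i, 'M[R]_(p i, m i))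
  (h : forall i, 'cV[R]_(p i)) (d : forall i, 'cV[R]_(m i)).
Variables (rho : 'cV[R]_n) (rho0 : 'I_t -> R).
Arguments Y : clear implicits.
Arguments T : clear implicits.
Arguments Q : clear implicits.
Arguments h : clear implicits.
Arguments d : clear implicits.

Let F := Fprime X T Q h d Y.

Lemma Fprime_linking xt : F xt ->
  exists y, (forall i, Y i (y i)) /\ linking T Q h xt.1 y.
Proof.
move=> [_ epi_xt].
have ex_y i : exists y, Q i *m y = h i - T i *m xt.1 /\ Y i y.
  apply: contrapT => no_y; have := epi_xt i; rewrite /epi /valf /=.
  rewrite (_ : [set y | _ /\ _] = set0) ?image_set0 ?ereal_inf0 //.
  by apply/seteqP; split => y //= yP; apply: no_y; exists y.
exists (fun i => projT1 (cid (ex_y i))); split=> [i|i].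
  by case: (projT2 (cid (ex_y i))).
by case: (projT2 (cid (ex_y i))) => -> _; rewrite addrC subrK.
Qed.

Lemma linking_Fprime x y : X x -> (forall i, Y i (y i)) -> linking T Q h x y ->
  F (x, fun i => vdot (d i) (y i)).
Proof.
move=> Xx Yy lxy; split=> // i; apply: ereal_inf_lbound; exists (y i) => //.
by split => //; rewrite -(lxy i) addrAC subrr add0r.
Qed.

Local Open Scope ereal_scope.

Lemma sigma_F_nonempty : sigma_F F rho rho0 \is a fin_num -> F !=set0.
Proof.
apply: contraPP => /set0P/negP/negPn/eqP ->.
by rewrite /sigma_F image_set0 ereal_inf0.
Qed.

Lemma sigma_F_le x y : X x -> (forall i, Y i (y i)) -> linking T Q h x y ->
  sigma_F F rho rho0 <= (vdot rho x + \sum_i vdot (rho0 i *: d i) (y i))%:E.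
Proof.
move=> Xx Yy lxy; apply: ereal_inf_lbound; exists (x, fun i => vdot (d i) (y i)).
  exact: linking_Fprime.
by congr (_ + _)%:E; apply: eq_bigr => i _; rewrite vdotZl.
Qed.

Lemma dual_obj_ge (X0 : X !=set0) (Y0 : forall i, Y i !=set0) al v :
  (forall x y, X x -> (forall i, Y i (y i)) ->
    v - \sum_i vdot (al i) (h i) <= vdot rho x + \sum_i vdot (rho0 i *: d i) (y i)
      - \sum_i vdot (al i) (T i *m x + Q i *m y i))%R ->
  v%:E <= dual_obj X T Q h d Y rho rho0 (fun i => (- al i)%R).
Proof.
move=> lagr; rewrite /dual_obj.
apply: lee_adde_sum_sigma => // [|y Yy].
  by apply: lte_add_pinfty; [exact: ltry|exact: sigma_lt_pinfty].
set cX := (rho + _)%R; set A := (- _)%R.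
pose B := (\sum_i vdot ((Q i)^T *m - al i + rho0 i *: d i) (y i))%R.
have eA : A = (\sum_i vdot (al i) (h i))%R.
  by rewrite /A (eq_bigr _ (fun i _ => vdotNl _ _)) sumrN opprK.
have eB : B = (\sum_i vdot (rho0 i *: d i) (y i) - \sum_i vdot (al i) (Q i *m y i))%R.
  rewrite /B -sumrB; apply: eq_bigr => i _.
  by rewrite vdotDl -vdot_mulmx vdotNl addrC.
have ecX x : vdot cX x = (vdot rho x - \sum_i vdot (al i) (T i *m x))%R.
  rewrite vdotDl vdot_suml -sumrN; congr (_ + _)%R; apply: eq_bigr => i _.
  by rewrite -vdot_mulmx vdotNl.
have HX : (v - A - B)%:E <= sigma X cX.
  apply: sigma_ge => x Xx; rewrite lee_fin ecX eA eB.
  have eTQ : (\sum_i vdot (al i) (T i *m x + Q i *m y i) =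
      \sum_i vdot (al i) (T i *m x) + \sum_i vdot (al i) (Q i *m y i))%R.
    by rewrite -big_split; apply: eq_bigr => i _; rewrite vdotDr.
  by have := lagr x y Xx Yy; rewrite eTQ; lra.
rewrite sumEFin -/B; apply: le_trans (leeD2r _ (leeD2l _ HX)).
by rewrite -!EFinD lee_fin; lra.
Qed.

Lemma dual_obj_le_cuts (rho0_ge0 : forall i, (0 <= rho0 i)%R) al x theta : X x ->
  (forall i, sigma_epi (valf (Q i) (d i) (Y i)) (al i) (rho0 i)
     <= (vdot (al i) (h i - T i *m x) + rho0 i * theta i)%:E) ->
  dual_obj X T Q h d Y rho rho0 al <= (vdot rho x + \sum_(i < t) rho0 i * theta i)%:E.
Proof.
move=> Xx cuts; rewrite /dual_obj.
have cutY i : sigma (Y i) ((Q i)^T *m al i + rho0 i *: d i) <=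
    (vdot (al i) (h i - T i *m x) + rho0 i * theta i)%:E.
  exact: le_trans (sigma_le_sigma_epi _ _ _ _ (rho0_ge0 i)) (cuts i).
apply: le_trans.
  by apply: leeD; [apply: leeD2l; exact: sigma_le Xx|apply: lee_sum => i _; exact: cutY].
rewrite sumEFin -!EFinD lee_fin vdotDl vdot_suml.
have eT : (\sum_(i < t) vdot ((T i)^T *m al i) x = \sum_i vdot (al i) (T i *m x))%R.
  by apply: eq_bigr => i _; rewrite vdot_mulmx.
have eC : (\sum_i (vdot (al i) (h i - T i *m x) + rho0 i * theta i) =
    \sum_i vdot (al i) (h i) - \sum_i vdot (al i) (T i *m x) + \sum_i rho0 i * theta i)%R.
  by rewrite -sumrB -big_split; apply: eq_bigr => i _; rewrite vdotBr.
by rewrite eT eC; lra.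
Qed.

End Duality.

Theorem mainTheorem4 (R : realType) (n t : nat) (p m : 'I_t -> nat)
  (X : set 'cV[R]_n) (Y : forall i : 'I_t, set 'cV[R]_(m i))
  (T : forall i, 'M[R]_(p i, n)) (Q : forall i, 'M[R]_(p i, m i))
  (h : forall i, 'cV[R]_(p i)) (d : forall i, 'cV[R]_(m i))
  (c : 'cV[R]_n)
  (hX : polyhedron X) (hX0 : X !=set0)
  (hY : forall i, polyhedron (Y i)) (hY0 : forall i, Y i !=set0)
  (rho : 'cV[R]_n) (rho0 : 'I_t -> R) (hrho0 : forall i, 0 <= rho0 i)
  (hfin : sigma_F (Fprime X T Q h d Y) rho rho0 \is a fin_num)
  (ahat : forall i, 'cV[R]_(p i))
  (hopt : forall a : forall i, 'cV[R]_(p i),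
     (dual_obj X T Q h d Y rho rho0 a <= dual_obj X T Q h d Y rho rho0 ahat)%E) :
  forall (x : 'cV[R]_n) (theta : 'I_t -> R),
    X x ->
    (forall i : 'I_t,
       sigma_epi (valf (Q i) (d i) (Y i)) (ahat i) (rho0 i)
       <= (vdot (ahat i) (h i - T i *m x) + rho0 i * theta i)%:E)%E ->
    (sigma_F (Fprime X T Q h d Y) rho rho0
     <= (vdot rho x + \sum_(i < t) rho0 i * theta i)%:E)%E.
Proof.
move=> x theta Xx cuts.
set F := Fprime X T Q h d Y in hfin *.
pose v := fine (sigma_F F rho rho0); have sigmaFE : sigma_F F rho rho0 = v%:E by rewrite fineK.
have [[x0 theta0] Fx0] := sigma_F_nonempty hfin.
have [y0 [Yy0 linked0]] := Fprime_linking Fx0.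
have feasible : exists x y, [/\ X x, forall i, Y i (y i) & linking T Q h x y].
  by exists x0, y0; split => //; case: Fx0.
have bounded x' y : X x' -> (forall i, Y i (y i)) -> linking T Q h x' y ->
    v <= vdot rho x' + \sum_i vdot (rho0 i *: d i) (y i).
  by move=> Xx' Yy lxy; rewrite -lee_fin -sigmaFE; exact: sigma_F_le.
have [al lagr] := lagrange_multipliers hX hY feasible bounded.
have cut_bound := dual_obj_le_cuts rho hrho0 Xx cuts.
rewrite sigmaFE; apply: le_trans (dual_obj_ge hX0 hY0 lagr) (le_trans (hopt _) cut_bound).
Qed.
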